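(* Let $n$ be a positive integer and let $L$ and $R$ be the matrices indexed by $P(n)$ defined in the context. Let $x=(x_{(d,c)})_{(d,c)\in P(n)}$ be a column vector such that $x_{(d,c)}=x_{(1,c)}$ for all $(d,c)\in P(n)$. Then $Lx=Rx$.
   Context: Let $\phi$ denote Euler's totient function. For a positive integer $n$ let $P(n)=\{(i,j): j\mid n,\ i\mid j\}$. Define square matrices $L$ and $R$ with rows and columns indexed by $P(n)$ as follows. For a row index $(i,j)$ and a column index $(d,c)$: $L_{(i,j)}^{(d,c)} = \phi(d)\,\frac{n}{\operatorname{lcm}(j,c)}$ if $d\mid i$ and $j\mid \operatorname{lcm}(i,c)$, and $L_{(i,j)}^{(d,c)}=0$ otherwise. For the row $(i,j)$, let $v$ be the largest divisor of $i$ coprime with $j/i$ and put $u=i/v$. Then $R_{(i,j)}^{(e,c)} = u\,\phi(ev/j)\,\frac{n}{\operatorname{lcm}(j,c)}$ if $(j/v)\mid e$, $e\mid j$ and $j\mid\operatorname{lcm}(i,c)$, and $R_{(i,j)}^{(e,c)}=0$ otherwise. (Equivalently, with variables $N_d^c$, $(d,c)\in P(n)$, row $(i,j)$ of $L$ gives the coefficients of $\sum_{d\mid i}\phi(d)\sum_{c\mid n,\ d\mid c,\ j\mid\operatorname{lcm}(i,c)}\frac{n}{\operatorname{lcm}(j,c)}N_d^c$, and row $(i,j)$ of $R$ gives the coefficients of $\sum_{d\mid v}u\phi(d)\sum_{c\mid n,\ d\mid c,\ j\mid \operatorname{lcm}(i,c)}\frac{n}{\operatorname{lcm}(j,c)}N_{jd/v}^c$.)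 *)

From mathcomp Require Import all_boot all_order all_algebra.
Set Implicit Arguments. Unset Strict Implicit. Unset Printing Implicit Defensive.

Definition Pidx (n : nat) : seq (nat * nat) :=
  [seq (i, j) | j <- divisors n, i <- divisors j].

Definition Lent (n : nat) (row col : nat * nat) : nat :=
  let: (i, j) := row in let: (d, c) := col in
  if (d %| i) && (j %| lcmn i c)
  then totient d * (n %/ lcmn j c) else 0.

Definition vpart (i j : nat) : nat :=
  \max_(w <- divisors i | coprime w (j %/ i)) w.

Definition Rent (n : nat) (row col : nat * nat) : nat :=
  let: (i, j) := row in let: (e, c) := col in
  let v := vpart i j in let u := i %/ v in
  if [&& (j %/ v) %| e, e %| j & j %| lcmn i c]
  then u * totient (e * v %/ j) * (n %/ lcmn j c) else 0.

(* Fix a row (i, j) and a column divisor c.  As x is constant on the column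
   block {(d, c) : d | c}, it suffices that the block sums of L and R agree.
   Both vanish unless j | lcm(i, c), and then both equal
   gcd(i, c) * n / lcm(j, c).  For L this is Gauss's identity
   sum_{d | g} phi(d) = g with g = gcd(i, c).  For R write i = u v and
   j = u m v with m = j / i: since v is coprime to m and every prime factor
   of u divides m (maximality of v), j | lcm(i, c) forces w = u m to divide c;
   the admissible e are then exactly e = w f with f | gcd(v, c / w), and
   e v / j = f, so the block sum is u gcd(v, c / w) = gcd(u v, u m (c / w)),
   using once more that v is coprime to m. *)

From mathcomp Require Import all_boot all_order all_algebra.
From mathcomp Require Import cyclic zify.
Import GRing.Theory.

Lemma bigmax_seq_attained (I : eqType) (r : seq I) (P : pred I) (F : I -> nat) :
  has P r -> exists2 i0, (i0 \in r) && P i0 & \max_(i <- r | P i) F i = F i0.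
Proof.
elim: r => //= a r IH hasP; rewrite big_cons.
have [Pa|nPa] := boolP (P a); last first.
  rewrite (negPf nPa) /= in hasP *; have [i0 /andP[i0r Pi0] ->] := IH hasP.
  by exists i0; rewrite // inE i0r orbT.
have [/IH [i0 /andP[i0r Pi0] ->]|/negPf noPr] := boolP (has P r); last first.
  by exists a; rewrite ?inE ?eqxx ?Pa // big_hasC ?noPr ?maxn0.
rewrite /maxn; case: ltnP => _; [exists i0 | exists a] => //.
- by rewrite inE i0r orbT.
- by rewrite inE eqxx.
Qed.

Section VPart.

Variables i j : nat.
Hypothesis i_gt0 : 0 < i.

Lemma leq_vpart w : w %| i -> coprime w (j %/ i) -> w <= vpart i j.
Proof. by move=> wi cw; apply: leq_bigmax_seq; rewrite // -dvdn_divisors. Qed.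

Lemma vpart_dvdn_coprime : (vpart i j %| i) && coprime (vpart i j) (j %/ i).
Proof.
rewrite /vpart.
have [|w /andP[wi cw] ->] :=
  @bigmax_seq_attained _ (divisors i) (coprime^~ (j %/ i)) id.
  by apply/hasP; exists 1; rewrite ?divisor1 ?coprime1n.
by rewrite dvdn_divisors ?wi.
Qed.

Lemma vpart_dvdn : vpart i j %| i.
Proof. by case/andP: vpart_dvdn_coprime. Qed.

Lemma coprime_vpart : coprime (vpart i j) (j %/ i).
Proof. by case/andP: vpart_dvdn_coprime. Qed.

Lemma prime_dvd_vpart_cofactor p :
  prime p -> p %| i %/ vpart i j -> p %| j %/ i.
Proof.
move=> p_pr p_u; apply/negPn/negP => p_m.
have : p * vpart i j <= vpart i j.
  apply: leq_vpart; last by rewrite coprimeMl coprime_vpart andbT prime_coprime.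
  by rewrite -{2}(divnK vpart_dvdn) dvdn_mul.
have v_gt0 : 0 < vpart i j := dvdn_gt0 i_gt0 vpart_dvdn.
have := prime_gt1 p_pr; nia.
Qed.

End VPart.

Lemma dvdn_of_dvdn_lcmn u v m c : 0 < u -> 0 < v -> 0 < m -> 0 < c ->
  coprime v m -> (forall p, prime p -> p %| u -> p %| m) ->
  u * m * v %| lcmn (u * v) c -> u * m %| c.
Proof.
move=> u_gt0 v_gt0 m_gt0 c_gt0 cvm u_m um_lcm.
apply/dvdn_partP => [|p]; first by rewrite muln_gt0 u_gt0.
rewrite mem_primes => /and3P[p_pr _ p_um].
rewrite p_part pfactor_dvdn //.
have p_m : p %| m by move: p_um; rewrite Euclid_dvdM // => /orP[/u_m->|].
have logm_gt0 : 0 < logn p m by rewrite logn_gt0 mem_primes p_pr m_gt0.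
have logv0 : logn p v = 0.
  apply/eqP; rewrite eqn0Ngt logn_gt0 mem_primes p_pr v_gt0 /=.
  apply: contraL p_m => p_v.
  by rewrite -prime_coprime // (coprime_dvdl p_v cvm).
have lcm_gt0 : 0 < lcmn (u * v) c by rewrite lcmn_gt0 muln_gt0 u_gt0 v_gt0.
have := dvdn_leq_log p lcm_gt0 um_lcm.
rewrite logn_lcm ?muln_gt0 ?u_gt0 ?v_gt0 //.
rewrite !lognM ?muln_gt0 ?u_gt0 ?v_gt0 // logv0.
rewrite leq_max; lia.
Qed.

Lemma sum_totient_divisors g : 0 < g -> \sum_(d <- divisors g) totient d = g.
Proof.
move=> g_gt0; rewrite -{2}(sum_totient_dvd g) -(big_mkord (dvdn^~ g) totient).
rewrite -[RHS]big_filter; apply: perm_big; apply: uniq_perm.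
- exact: divisors_uniq.
- by rewrite filter_uniq ?iota_uniq.
move=> d; rewrite mem_filter mem_index_iota -dvdn_divisors //.
by case dg: (d %| g); rewrite //= ltnS dvdn_leq.
Qed.

Lemma sum_totient_divisors_dvdn i c :
  0 < c -> \sum_(d <- divisors c | d %| i) totient d = gcdn i c.
Proof.
move=> c_gt0; have g_gt0 : 0 < gcdn i c by rewrite gcdn_gt0 c_gt0 orbT.
rewrite -big_filter -(@sum_totient_divisors (gcdn i c)) //.
apply: perm_big; apply: uniq_perm.
- by rewrite filter_uniq ?divisors_uniq.
- exact: divisors_uniq.
move=> d; rewrite mem_filter -(dvdn_divisors _ c_gt0) -(dvdn_divisors _ g_gt0).
by rewrite dvdn_gcd andbC.
Qed.

Lemma perm_divisors_multiple w c j : 0 < c -> w %| c -> w %| j ->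
  perm_eq [seq e <- divisors c | (w %| e) && (e %| j)]
          [seq w * f | f <- divisors (gcdn (j %/ w) (c %/ w))].
Proof.
move=> c_gt0 wc wj; have w_gt0 := dvdn_gt0 c_gt0 wc.
have g_gt0 : 0 < gcdn (j %/ w) (c %/ w).
  by rewrite gcdn_gt0 orbC divn_gt0 // (dvdn_leq c_gt0 wc).
apply: uniq_perm.
- by rewrite filter_uniq ?divisors_uniq.
- rewrite map_inj_uniq ?divisors_uniq // => a b /eqP.
  by rewrite eqn_pmul2l // => /eqP.
move=> e; rewrite mem_filter -(dvdn_divisors _ c_gt0); apply/idP/mapP.
  case/andP=> /andP[/dvdnP[f ->] fj] fc; exists f; last exact: mulnC.
  by rewrite -(dvdn_divisors _ g_gt0) dvdn_gcd !dvdn_divRL ?fj.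
case=> f; rewrite -(dvdn_divisors _ g_gt0) dvdn_gcd !dvdn_divRL // mulnC.
by move=> /andP[fj fc] ->; rewrite dvdn_mulr ?fj ?fc.
Qed.

Lemma sum_Lent_divisors n i j c : 0 < c ->
  \sum_(d <- divisors c) Lent n (i, j) (d, c) =
  (j %| lcmn i c) * gcdn i c * (n %/ lcmn j c).
Proof.
move=> c_gt0; rewrite /Lent; case: (j %| lcmn i c); last first.
  by rewrite big1 // => d _; rewrite andbF.
under eq_bigr do rewrite andbT.
by rewrite -big_mkcond -big_distrl /= sum_totient_divisors_dvdn // mul1n.
Qed.

Lemma sum_Rent_divisors n i j c : 0 < j -> i %| j -> 0 < c ->
  \sum_(e <- divisors c) Rent n (i, j) (e, c) =
  (j %| lcmn i c) * gcdn i c * (n %/ lcmn j c).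
Proof.
move=> j_gt0 ij c_gt0; have i_gt0 := dvdn_gt0 j_gt0 ij.
rewrite /Rent; case jic: (j %| lcmn i c); last first.
  by rewrite big1 // => e _; rewrite !andbF.
have v_i := vpart_dvdn i j i_gt0; have cvm := coprime_vpart i j i_gt0.
set v := vpart i j in v_i cvm *; set u := i %/ v; set m := j %/ i in cvm *.
set N := n %/ lcmn j c.
have v_gt0 : 0 < v := dvdn_gt0 i_gt0 v_i.
have ei : i = u * v by rewrite divnK.
have u_gt0 : 0 < u by move: i_gt0; rewrite ei muln_gt0 => /andP[].
have m_gt0 : 0 < m by rewrite divn_gt0 // dvdn_leq.
have ej : j = u * m * v by rewrite mulnAC -ei mulnC divnK.
have w_gt0 : 0 < u * m by rewrite muln_gt0 u_gt0.
have w_c : u * m %| c.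
  apply: (@dvdn_of_dvdn_lcmn u v m c) => //.
    exact: prime_dvd_vpart_cofactor.
  by rewrite -ej -ei.
have w_j : u * m %| j by rewrite ej dvdn_mulr.
rewrite (_ : j %/ v = u * m); last by rewrite ej mulnK.
under eq_bigr do rewrite andbT.
rewrite -big_mkcond -big_filter.
rewrite (perm_big _ (@perm_divisors_multiple _ _ _ c_gt0 w_c w_j)).
rewrite big_map (_ : j %/ (u * m) = v); last first.
  by rewrite ej (mulKn v w_gt0).
rewrite (eq_bigr (fun f => u * totient f * N)); last first.
  by move=> f _; rewrite ej [u * m * f * v]mulnAC mulKn // muln_gt0 w_gt0.
rewrite -big_distrl -big_distrr /= sum_totient_divisors ?gcdn_gt0 ?v_gt0 //.
rewrite mul1n; congr (_ * N).
by rewrite ei -{2}(divnK w_c) [_ * (u * m)]mulnC -mulnA -muln_gcdr Gauss_gcdr.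
Qed.

Local Open Scope ring_scope.

Theorem proposition3p2 (K : nzRingType) (n : nat) (x : nat * nat -> K) :
  (0 < n)%N ->
  (forall p, p \in Pidx n -> x p = x (1%N, p.2)) ->
  forall r, r \in Pidx n ->
    \sum_(q <- Pidx n) (Lent n r q)%:R * x q =
    \sum_(q <- Pidx n) (Rent n r q)%:R * x q.
Proof.
move=> n_gt0 x_row _ /allpairsPdep[j [i [jn ij ->]]].
rewrite -dvdn_divisors // in jn; have j_gt0 := dvdn_gt0 n_gt0 jn.
rewrite -dvdn_divisors // in ij.
rewrite !big_allpairs_dep; apply: eq_big_seq => c cn.
have c_gt0 : (0 < c)%N by rewrite (dvdn_gt0 n_gt0) // dvdn_divisors.
have x_col d : d \in divisors c -> x (d, c) = x (1%N, c).
  by move=> dc; apply: x_row; apply/allpairsPdep; exists c, d.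
under eq_big_seq => d dc do rewrite x_col //.
under [RHS]eq_big_seq => e ec do rewrite x_col //.
rewrite -!mulr_suml -!natr_sum.
by rewrite sum_Lent_divisors // sum_Rent_divisors.
Qed.
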